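(* Let $0<r<1$ and $0<\theta<\pi/2$. Let $Q\subset\mathbb{D}$ be the domain bounded by four circular arcs: the arc in the upper half-plane orthogonal to the unit circle at $e^{i\theta}$ and $e^{i(\pi-\theta)}$; the arc in the lower half-plane orthogonal to the unit circle at $e^{i(\theta-\pi)}$ and $e^{-i\theta}$; the circular arc through $r$, $i$, $-i$; and the circular arc through $-r$, $i$, $-i$. Let $a,b,c,d$ be the points of intersection of these arcs lying in the second, third, fourth and first quadrants respectively. Then $$\mathrm{QM}(Q;a,b,c,d)=\frac{\pi-2\beta}{\rho},$$ where $u=\tan(\theta/2)$, $\rho=2\log\frac{1+u}{1-u}$ and $\beta=\operatorname{arccot}\frac{2r}{1-r^2}$.
   Context: A quadrilateral $(D;z_1,z_2,z_3,z_4)$ is a Jordan domain $D\subset\mathbb{C}$ together with four points $z_1,z_2,z_3,z_4\in\partial D$ in positive order on $\partial D$. Its modulus $\mathrm{QM}(D;z_1,z_2,z_3,z_4)=h$ is defined by the requirement that there is a conformal map of $D$ onto the rectangle with vertices $1+ih, ih, 0, 1$ extending to the boundary so that $z_1\mapsto 1+ih$, $z_2\mapsto ih$, $z_3\mapsto 0$, $z_4\mapsto 1$. Equivalently, it is the conformal modulus of the family of all curves in $D$ joining the boundary arc from $z_2$ to $z_3$ with the boundary arc from $z_4$ to $z_1$. $\mathbb{D}$ denotes the unit disk. *)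

From Stdlib Require Import Reals.
Open Scope R_scope.

Definition Cpx : Type := (R * R)%type.
Definition Cre (z : Cpx) : R := fst z.
Definition Cim (z : Cpx) : R := snd z.
Definition Cadd (z w : Cpx) : Cpx := (fst z + fst w, snd z + snd w).
Definition Csub (z w : Cpx) : Cpx := (fst z - fst w, snd z - snd w).
Definition Cmul (z w : Cpx) : Cpx :=
  (fst z * fst w - snd z * snd w, fst z * snd w + snd z * fst w).
Definition Cmod (z : Cpx) : R := sqrt (fst z ^ 2 + snd z ^ 2).
Definition Cexpi (t : R) : Cpx := (cos t, sin t).

Definition continuous_on (F : Cpx -> Cpx) (S : Cpx -> Prop) : Prop :=
  forall z, S z -> forall eps, eps > 0 -> exists delta, delta > 0 /\
    forall w, S w -> Cmod (Csub w z) < delta -> Cmod (Csub (F w) (F z)) < eps.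

Definition holomorphic_on (F : Cpx -> Cpx) (D : Cpx -> Prop) : Prop :=
  forall z, D z -> exists l : Cpx, forall eps, eps > 0 -> exists delta, delta > 0 /\
    forall h : Cpx, Cmod h < delta ->
      Cmod (Csub (Csub (F (Cadd z h)) (F z)) (Cmul l h)) <= eps * Cmod h.

Definition closure (D : Cpx -> Prop) (z : Cpx) : Prop :=
  forall eps, eps > 0 -> exists w, D w /\ Cmod (Csub w z) < eps.

Definition open_rect (h : R) (w : Cpx) : Prop :=
  0 < fst w < 1 /\ 0 < snd w < h.
Definition closed_rect (h : R) (w : Cpx) : Prop :=
  0 <= fst w <= 1 /\ 0 <= snd w <= h.

(* QM(D; z1,z2,z3,z4) = h : there is a conformal map of D onto the rectangle
   with vertices 1+ih, ih, 0, 1 extending to a homeomorphism of the closures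
   (bijective and continuous on the compact closure) with
   z1 |-> 1+ih, z2 |-> ih, z3 |-> 0, z4 |-> 1. *)
Definition IsQM (D : Cpx -> Prop) (z1 z2 z3 z4 : Cpx) (h : R) : Prop :=
  h > 0 /\
  exists F : Cpx -> Cpx,
    holomorphic_on F D /\
    (forall z, D z -> open_rect h (F z)) /\
    (forall w, open_rect h w -> exists z, D z /\ F z = w) /\
    continuous_on F (closure D) /\
    (forall z, closure D z -> closed_rect h (F z)) /\
    (forall w, closed_rect h w -> exists z, closure D z /\ F z = w) /\
    (forall z1' z2', closure D z1' -> closure D z2' -> F z1' = F z2' -> z1' = z2') /\
    F z1 = (1, h) /\ F z2 = (0, h) /\ F z3 = (0, 0) /\ F z4 = (1, 0).

(* principal arccot, values in (0, pi) *)
Definition arccot (x : R) : R := PI / 2 - atan x.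

(* Circle orthogonal to the unit circle through e^{i th}, e^{i(pi-th)}:
   center i / sin th, radius cot th; and its mirror image in the real axis. *)
Definition upper_center (th : R) : Cpx := (0, 1 / sin th).
Definition lower_center (th : R) : Cpx := (0, - (1 / sin th)).
Definition orth_radius (th : R) : R := cos th / sin th.
(* Circle through r, i, -i: center ((r^2-1)/(2r), 0), radius (1+r^2)/(2r);
   circle through -r, i, -i: mirror image in the imaginary axis. *)
Definition right_center (r : R) : Cpx := ((r ^ 2 - 1) / (2 * r), 0).
Definition left_center (r : R) : Cpx := ((1 - r ^ 2) / (2 * r), 0).
Definition lens_radius (r : R) : R := (1 + r ^ 2) / (2 * r).

Definition Qdom (r th : R) (z : Cpx) : Prop :=
  Cmod z < 1 /\
  Cmod (Csub z (right_center r)) < lens_radius r /\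
  Cmod (Csub z (left_center r)) < lens_radius r /\
  Cmod (Csub z (upper_center th)) > orth_radius th /\
  Cmod (Csub z (lower_center th)) > orth_radius th.

From Stdlib Require Import Reals Lra Psatz.
From Coquelicot Require Import Hierarchy Derive.
Open Scope R_scope.

(* The Cayley transform w = (i + z) / (i - z) maps the unit disk onto
   the right half-plane.  It sends the circles through -i and i to rays from 0
   (arg w = -atan t and arg w = atan t, with t = 2r / (1 - r^2)) and the two
   orthogonal circles to the circles |w| = K and |w| = 1/K, with
   K = (1 + u) / (1 - u).  Hence log w maps Q onto a rectangle, and the affine
   map (log w + ln K + i atan t) / (2 ln K) maps Q onto [0, 1] x [0, h] with
   h = 2 atan t / (2 ln K) = (pi - 2 beta) / rho, vertices in the right order. *)

Definition d2 (f : R * R -> R) (p : R * R) (a b : R) : Prop :=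
  filterdiff f (locally p) (fun h : R * R => fst h * a + snd h * b).

(* Coquelicot states linear maps over its module structures; this closes an
   identity between two such maps that holds by ring arithmetic in R. *)
Ltac linear_map_eq :=
  intros [h k]; change R in h, k; cbn -[Rmult Rplus Rminus Ropp];
  match goal with |- @eq _ ?a ?b => change (@eq R a b) end; ring.

Lemma d2_ext f p a b a' b' : d2 f p a b -> a = a' -> b = b' -> d2 f p a' b'.
Proof. now intros H -> ->. Qed.

Lemma d2_fst p : d2 fst p 1 0.
Proof.
  eapply filterdiff_ext_lin; [apply filterdiff_linear, is_linear_fst|].
  linear_map_eq.
Qed.

Lemma d2_snd p : d2 snd p 0 1.
Proof.
  eapply filterdiff_ext_lin; [apply filterdiff_linear, is_linear_snd|].
  linear_map_eq.
Qed.

Lemma d2_const c p : d2 (fun _ => c) p 0 0.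
Proof. eapply filterdiff_ext_lin; [apply filterdiff_const|]. linear_map_eq. Qed.

Lemma d2_plus f g p a b c d :
  d2 f p a b -> d2 g p c d -> d2 (fun q => f q + g q) p (a + c) (b + d).
Proof.
  intros Hf Hg. eapply filterdiff_ext_lin; [exact (filterdiff_plus_fct _ _ _ _ Hf Hg)|].
  linear_map_eq.
Qed.

Lemma d2_minus f g p a b c d :
  d2 f p a b -> d2 g p c d -> d2 (fun q => f q - g q) p (a - c) (b - d).
Proof.
  intros Hf Hg. eapply filterdiff_ext_lin; [exact (filterdiff_minus_fct _ _ _ _ Hf Hg)|].
  linear_map_eq.
Qed.

Lemma d2_mult f g p a b c d : d2 f p a b -> d2 g p c d ->
  d2 (fun q => f q * g q) p (a * g p + f p * c) (b * g p + f p * d).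
Proof.
  intros Hf Hg.
  eapply filterdiff_ext_lin; [exact (filterdiff_mult_fct _ _ _ _ _ Rmult_comm Hf Hg)|].
  linear_map_eq.
Qed.

Lemma d2_comp (g : R -> R) f p a b l : is_derive g (f p) l -> d2 f p a b ->
  d2 (fun q => g (f q)) p (l * a) (l * b).
Proof.
  intros Hg Hf. eapply filterdiff_ext_lin; [exact (filterdiff_comp' _ _ _ _ _ Hf Hg)|].
  linear_map_eq.
Qed.

Lemma d2_ln f p a b : 0 < f p -> d2 f p a b ->
  d2 (fun q => ln (f q)) p (/ f p * a) (/ f p * b).
Proof. intros Hp. apply d2_comp, is_derive_Reals, derivable_pt_lim_ln, Hp. Qed.

Lemma d2_atan f p a b : d2 f p a b ->
  d2 (fun q => atan (f q)) p (/ (1 + f p ^ 2) * a) (/ (1 + f p ^ 2) * b).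
Proof. apply d2_comp, is_derive_Reals, derivable_pt_lim_atan. Qed.

Lemma d2_inv f p a b : f p <> 0 -> d2 f p a b ->
  d2 (fun q => / f q) p (- / f p ^ 2 * a) (- / f p ^ 2 * b).
Proof.
  intros Hp. apply d2_comp.
  replace (- / f p ^ 2) with (- one / f p ^ 2) by (cbn; field; exact Hp).
  exact (is_derive_inv _ _ _ (is_derive_id (f p)) Hp).
Qed.

Lemma d2_div_const f p a b c : d2 f p a b -> d2 (fun q => f q / c) p (a / c) (b / c).
Proof.
  intros Hf. eapply d2_ext; [exact (d2_mult _ _ _ _ _ _ _ Hf (d2_const (/ c) p))|
    unfold Rdiv; ring|unfold Rdiv; ring].
Qed.

Ltac d2_polynomial :=
  repeat match goal with
  | |- d2 (fun q => @?f q + @?g q) _ _ _ => apply d2_plus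
  | |- d2 (fun q => @?f q - @?g q) _ _ _ => apply d2_minus
  | |- d2 (fun q => @?f q * @?g q) _ _ _ => apply d2_mult
  | |- d2 fst _ _ _ => apply d2_fst
  | |- d2 snd _ _ _ => apply d2_snd
  | |- d2 (fun _ => ?c) _ _ _ => apply d2_const
  end.
Lemma norm_plane (v : R * R) : norm v = Cmod v.
Proof.
  destruct v as [x y]. cbn. unfold prod_norm, Cmod. cbn.
  pose proof (pow2_abs x) as Ex; pose proof (pow2_abs y) as Ey. simpl in Ex, Ey.
  now rewrite Ex, Ey.
Qed.

Lemma Cmod_le_abs_sum (a b : R) : Cmod (a, b) <= Rabs a + Rabs b.
Proof.
  unfold Cmod; cbn [fst snd].
  pose proof (Rabs_pos a); pose proof (Rabs_pos b).
  rewrite <- (sqrt_pow2 (Rabs a + Rabs b)) by lra.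
  apply sqrt_le_1_alt. rewrite <- (pow2_abs a), <- (pow2_abs b). nra.
Qed.

Lemma locally_Cmod (z : Cpx) (P : Cpx -> Prop) : locally z P ->
  exists delta, delta > 0 /\ forall w, Cmod (Csub w z) < delta -> P w.
Proof.
  intros [e He]. exists e. split; [apply cond_pos|].
  intros w Hw. apply He.
  apply (prod_norm_compat1 (K := R_AbsRing) (U := R_NormedModule) (V := R_NormedModule)).
  change (norm (minus w z) < e). now rewrite norm_plane.
Qed.

Lemma d2_estimate f z a b : d2 f z a b ->
  forall eps, eps > 0 -> exists delta, delta > 0 /\ forall w, Cmod (Csub w z) < delta ->
    Rabs (f w - f z - (a * (fst w - fst z) + b * (snd w - snd z))) <= eps * Cmod (Csub w z).
Proof.
  intros [_ Hd] eps He.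
  (* [fun P HP => HP] : the neighbourhood filter of z converges to z *)
  destruct (locally_Cmod _ _ (Hd z (fun P HP => HP) (mkposreal eps He)))
    as [delta [Hdelta Hw]].
  exists delta. split; [exact Hdelta|]. intros w Hwz. specialize (Hw w Hwz).
  change (norm (minus w z)) with (norm (Csub w z : R * R)) in Hw.
  rewrite norm_plane in Hw. cbn -[Cmod] in Hw.
  eapply Rle_trans; [|exact Hw]. right. f_equal. ring.
Qed.

Lemma d2_continuous f z a b : d2 f z a b ->
  forall eps, eps > 0 -> exists delta, delta > 0 /\ forall w, Cmod (Csub w z) < delta ->
    Rabs (f w - f z) < eps.
Proof.
  intros Hf eps He.
  assert (Hc := filterdiff_continuous f z (ex_intro _ (fun h : R * R => fst h * a + snd h * b) Hf)).
  destruct (locally_Cmod _ _ (proj1 (filterlim_locally _ _) Hc (mkposreal eps He)))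
    as [delta [Hdelta Hw]].
  exists delta. split; [exact Hdelta|]. intros w Hwz. exact (Hw w Hwz).
Qed.

Lemma complex_diff_of_CR X Y z A B : d2 X z A B -> d2 Y z (- B) A ->
  exists l : Cpx, forall eps, eps > 0 -> exists delta, delta > 0 /\
    forall h : Cpx, Cmod h < delta ->
      Cmod (Csub (Csub ((fun w => (X w, Y w)) (Cadd z h)) (X z, Y z)) (Cmul l h))
        <= eps * Cmod h.
Proof.
  intros HX HY. exists (A, - B). intros eps He.
  destruct (d2_estimate _ _ _ _ HX (eps / 2)) as [d1 [Hd1 H1]]; [lra|].
  destruct (d2_estimate _ _ _ _ HY (eps / 2)) as [d2' [Hd2 H2]]; [lra|].
  exists (Rmin d1 d2'). split; [now apply Rmin_glb_lt|].
  intros [h k] Hh.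
  assert (Ez : Csub (Cadd z (h, k)) z = (h, k)) by (unfold Csub, Cadd; cbn; f_equal; ring).
  specialize (H1 (Cadd z (h, k))). specialize (H2 (Cadd z (h, k))). rewrite Ez in H1, H2.
  specialize (H1 (Rlt_le_trans _ _ _ Hh (Rmin_l _ _))).
  specialize (H2 (Rlt_le_trans _ _ _ Hh (Rmin_r _ _))).
  unfold Cadd, Csub, Cmul in *; cbn [fst snd] in *.
  eapply Rle_trans; [apply Cmod_le_abs_sum|].
  replace (X (fst z + h, snd z + k) - X z - (A * h - - B * k))
    with (X (fst z + h, snd z + k) - X z - (A * (fst z + h - fst z) + B * (snd z + k - snd z))) by ring.
  replace (Y (fst z + h, snd z + k) - Y z - (A * k + - B * h))
    with (Y (fst z + h, snd z + k) - Y z - (- B * (fst z + h - fst z) + A * (snd z + k - snd z))) by ring.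
  lra.
Qed.

Lemma continuous_pair X Y z a b c d : d2 X z a b -> d2 Y z c d ->
  forall eps, eps > 0 -> exists delta, delta > 0 /\ forall w, Cmod (Csub w z) < delta ->
    Cmod (Csub (X w, Y w) (X z, Y z)) < eps.
Proof.
  intros HX HY eps He.
  destruct (d2_continuous _ _ _ _ HX (eps / 2)) as [d1 [Hd1 H1]]; [lra|].
  destruct (d2_continuous _ _ _ _ HY (eps / 2)) as [d2' [Hd2 H2]]; [lra|].
  exists (Rmin d1 d2'). split; [now apply Rmin_glb_lt|]. intros w Hw.
  specialize (H1 w (Rlt_le_trans _ _ _ Hw (Rmin_l _ _))).
  specialize (H2 w (Rlt_le_trans _ _ _ Hw (Rmin_r _ _))).
  eapply Rle_lt_trans; [apply Cmod_le_abs_sum|]. cbn [fst snd]. lra.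
Qed.

(** Every
    boundary condition of the problem is turned into one of these. *)
Definition same_sign (u v : R) : Prop := (0 < u <-> 0 < v) /\ (0 <= u <-> 0 <= v).

Lemma same_sign_sym u v : same_sign u v -> same_sign v u.
Proof. unfold same_sign; tauto. Qed.

Lemma same_sign_trans u v w : same_sign u v -> same_sign v w -> same_sign u w.
Proof. unfold same_sign; tauto. Qed.

Lemma same_sign_zero u v : same_sign u v -> v = 0 -> u = 0.
Proof.
  intros [Hlt Hle] ->. assert (0 <= u) by (apply Hle; lra).
  assert (~ 0 < u) by (rewrite Hlt; lra). lra.
Qed.

Lemma same_sign_factor m u v : 0 < m -> m * u = v -> same_sign u v.
Proof. intros Hm <-. split; split; intros H; nra. Qed.

Lemma same_sign_increasing (P : R -> Prop) (f : R -> R) a b :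
  (forall x y, P x -> P y -> x < y -> f x < f y) -> P a -> P b ->
  same_sign (f a - f b) (a - b).
Proof.
  intros Hf Ha Hb.
  destruct (Rtotal_order a b) as [H|[->|H]].
  - pose proof (Hf a b Ha Hb H). unfold same_sign; lra.
  - unfold same_sign; lra.
  - pose proof (Hf b a Hb Ha H). unfold same_sign; lra.
Qed.

Lemma same_sign_ln a b : 0 < a -> 0 < b -> same_sign (ln a - ln b) (a - b).
Proof. apply (same_sign_increasing (fun x => 0 < x)). intros; now apply ln_increasing. Qed.

Lemma same_sign_atan a b : same_sign (atan a - atan b) (a - b).
Proof. apply (same_sign_increasing (fun _ => True)); auto. intros; now apply atan_increasing. Qed.

Lemma same_sign_sqrt a b : 0 <= a -> 0 <= b -> same_sign (sqrt a - sqrt b) (a - b).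
Proof. apply (same_sign_increasing (fun x => 0 <= x)). intros; now apply sqrt_lt_1_alt. Qed.

(** The Cayley transform [w = (i + z) / (i - z)] maps the unit disk onto the
    right half-plane; its principal logarithm [log_modulus + i argument] is the
    conformal map at the heart of the proof. *)

Definition disk_gap (z : Cpx) : R := 1 - fst z * fst z - snd z * snd z.
Definition dist2_neg_i (z : Cpx) : R := fst z * fst z + (1 + snd z) * (1 + snd z).
Definition dist2_i (z : Cpx) : R := fst z * fst z + (1 - snd z) * (1 - snd z).
(* ln |w| and arg w, written with real functions of z *)
Definition log_modulus (z : Cpx) : R := (ln (dist2_neg_i z) - ln (dist2_i z)) / 2.
Definition slope (z : Cpx) : R := - 2 * fst z * / disk_gap z.
Definition argument (z : Cpx) : R := atan (slope z).

(* w = cayley z in coordinates, and its inverse z = i (w - 1) / (w + 1) *)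
Definition cayley (z : Cpx) : Cpx := (disk_gap z / dist2_i z, - 2 * fst z / dist2_i z).
Definition cayley_inv (w : Cpx) : Cpx :=
  (- 2 * snd w / ((fst w + 1) ^ 2 + snd w ^ 2),
   (fst w ^ 2 + snd w ^ 2 - 1) / ((fst w + 1) ^ 2 + snd w ^ 2)).

Lemma dist2_neg_i_pos z : 0 < disk_gap z -> 0 < dist2_neg_i z.
Proof. unfold disk_gap, dist2_neg_i. intros. nra. Qed.

Lemma dist2_i_pos z : 0 < disk_gap z -> 0 < dist2_i z.
Proof. unfold disk_gap, dist2_i. intros. nra. Qed.

Lemma dist2_product z : dist2_neg_i z * dist2_i z = disk_gap z ^ 2 + 4 * fst z ^ 2.
Proof. unfold dist2_neg_i, dist2_i, disk_gap. ring. Qed.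

Lemma cayley_invK z : 0 < disk_gap z -> cayley_inv (cayley z) = z.
Proof.
  intros HS. pose proof (dist2_i_pos z HS) as HM. destruct z as [x y].
  unfold cayley, cayley_inv, disk_gap, dist2_i in *; cbn [fst snd] in *.
  set (M := x * x + (1 - y) * (1 - y)) in *.
  assert (ED : ((1 - x * x - y * y) / M + 1) ^ 2 + (- 2 * x / M) ^ 2 = 4 / M).
  { field_simplify_eq; [|lra]. unfold M; ring. }
  rewrite ED. f_equal; field_simplify_eq; try lra; unfold M; ring.
Qed.

Lemma cayley_inv_dists p q : 0 < p ->
  disk_gap (cayley_inv (p, q)) = 4 * p / ((p + 1) ^ 2 + q ^ 2) /\
  dist2_i (cayley_inv (p, q)) = 4 / ((p + 1) ^ 2 + q ^ 2) /\
  dist2_neg_i (cayley_inv (p, q)) = (p ^ 2 + q ^ 2) * (4 / ((p + 1) ^ 2 + q ^ 2)).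
Proof.
  intros Hp. assert (HD : 0 < (p + 1) ^ 2 + q ^ 2) by nra.
  unfold cayley_inv, disk_gap, dist2_i, dist2_neg_i; cbn [fst snd].
  repeat split; field; lra.
Qed.

Lemma cayley_inv_in_disk p q : 0 < p -> 0 < disk_gap (cayley_inv (p, q)).
Proof.
  intros Hp. rewrite (proj1 (cayley_inv_dists p q Hp)).
  apply Rdiv_lt_0_compat; nra.
Qed.

Lemma cayleyK p q : 0 < p -> cayley (cayley_inv (p, q)) = (p, q).
Proof.
  intros Hp. assert (HD : 0 < (p + 1) ^ 2 + q ^ 2) by nra.
  destruct (cayley_inv_dists p q Hp) as [ES [EM _]].
  unfold cayley. rewrite ES, EM. unfold cayley_inv; cbn [fst snd].
  f_equal; field; lra.
Qed.

Lemma log_modulus_cayley z : 0 < disk_gap z ->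
  log_modulus z = ln (fst (cayley z) ^ 2 + snd (cayley z) ^ 2) / 2.
Proof.
  intros HS. pose proof (dist2_neg_i_pos z HS). pose proof (dist2_i_pos z HS).
  unfold log_modulus, cayley; cbn [fst snd].
  replace ((disk_gap z / dist2_i z) ^ 2 + (-2 * fst z / dist2_i z) ^ 2)
    with (dist2_neg_i z / dist2_i z).
  - assert (E : ln (dist2_neg_i z / dist2_i z) = ln (dist2_neg_i z) - ln (dist2_i z)).
    { unfold Rdiv. rewrite ln_mult, ln_Rinv; [ring|lra|lra|apply Rinv_0_lt_compat; lra]. }
    now rewrite E.
  - apply (Rmult_eq_reg_r (dist2_i z ^ 2)); [|nra].
    field_simplify; [|lra|lra]. rewrite <- dist2_product. ring.
Qed.

Lemma slope_cayley z : 0 < disk_gap z -> slope z = snd (cayley z) / fst (cayley z).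
Proof.
  intros HS. pose proof (dist2_i_pos z HS).
  unfold slope, cayley; cbn [fst snd]. field. lra.
Qed.

Lemma right_halfplane_polar_inj p1 q1 p2 q2 : 0 < p1 -> 0 < p2 ->
  ln (p1 ^ 2 + q1 ^ 2) = ln (p2 ^ 2 + q2 ^ 2) -> atan (q1 / p1) = atan (q2 / p2) ->
  (p1, q1) = (p2, q2).
Proof.
  intros Hp1 Hp2 Hln Hat.
  apply ln_inv in Hln; [|nra|nra].
  assert (Hs : q1 / p1 = q2 / p2) by now rewrite <- (tan_atan (q1 / p1)), Hat, tan_atan.
  set (T := q2 / p2) in Hs.
  assert (Hq1 : q1 = T * p1) by (rewrite <- Hs; field; lra).
  assert (Hq2 : q2 = T * p2) by (unfold T; field; lra).
  rewrite Hq1, Hq2 in Hln.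
  assert (Hp : p1 = p2) by (assert (p1 ^ 2 = p2 ^ 2) by nra; nra).
  now rewrite Hq1, Hq2, Hp.
Qed.

Lemma log_coordinates_inj z1 z2 : 0 < disk_gap z1 -> 0 < disk_gap z2 ->
  log_modulus z1 = log_modulus z2 -> argument z1 = argument z2 -> z1 = z2.
Proof.
  intros H1 H2 Hl Ha.
  rewrite <- (cayley_invK z1 H1), <- (cayley_invK z2 H2). f_equal.
  unfold argument in Ha. rewrite !slope_cayley in Ha by assumption.
  rewrite !log_modulus_cayley in Hl by assumption.
  rewrite (surjective_pairing (cayley z1)), (surjective_pairing (cayley z2)).
  apply right_halfplane_polar_inj; [| |lra|exact Ha];
    unfold cayley; cbn [fst]; apply Rdiv_lt_0_compat;
    auto using dist2_i_pos.
Qed.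

Lemma log_coordinates_onto L a : - (PI / 2) < a < PI / 2 ->
  exists z, 0 < disk_gap z /\ log_modulus z = L /\ argument z = a.
Proof.
  intros Ha. assert (Hc : 0 < cos a) by (apply cos_gt_0; lra).
  set (p := exp L * cos a). set (q := exp L * sin a).
  assert (Hp : 0 < p) by (apply Rmult_lt_0_compat; [apply exp_pos|exact Hc]).
  exists (cayley_inv (p, q)).
  pose proof (cayley_inv_in_disk p q Hp) as HS.
  split; [exact HS|split].
  - rewrite log_modulus_cayley, cayleyK by assumption. cbn [fst snd].
    replace (p ^ 2 + q ^ 2) with (exp L * exp L)
      by (unfold p, q; pose proof (sin2_cos2 a); unfold Rsqr in *; nra).
    rewrite ln_mult, ln_exp by apply exp_pos. field.
  - unfold argument. rewrite slope_cayley, cayleyK by assumption. cbn [fst snd].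
    replace (q / p) with (tan a) by (unfold tan, p, q; field; split;
      [lra|apply Rgt_not_eq, exp_pos]).
    apply atan_tan; lra.
Qed.

Definition dlog_x (z : Cpx) : R := fst z / dist2_neg_i z - fst z / dist2_i z.
Definition dlog_y (z : Cpx) : R := (1 + snd z) / dist2_neg_i z + (1 - snd z) / dist2_i z.

Lemma d2_log_modulus z : 0 < disk_gap z -> d2 log_modulus z (dlog_x z) (dlog_y z).
Proof.
  intros HS. pose proof (dist2_neg_i_pos z HS). pose proof (dist2_i_pos z HS).
  unfold log_modulus. eapply d2_ext.
  - apply d2_div_const, d2_minus; apply d2_ln; try assumption;
      unfold dist2_neg_i, dist2_i; d2_polynomial.
  - unfold dlog_x, dist2_neg_i, dist2_i in *. cbv beta. field. lra.
  - unfold dlog_y, dist2_neg_i, dist2_i in *. cbv beta. field. lra.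
Qed.

Lemma d2_argument z : 0 < disk_gap z -> d2 argument z (- dlog_y z) (dlog_x z).
Proof.
  intros HS. pose proof (dist2_neg_i_pos z HS). pose proof (dist2_i_pos z HS).
  assert (E2 : 1 + (-2 * fst z * / disk_gap z) ^ 2 = dist2_neg_i z * dist2_i z / disk_gap z ^ 2)
    by (rewrite dist2_product; field; lra).
  unfold argument, slope. eapply d2_ext;
    [apply d2_atan, d2_mult; [d2_polynomial|apply d2_inv; [lra|unfold disk_gap; d2_polynomial]]|..];
    cbv beta; rewrite E2; unfold dlog_x, dlog_y, dist2_neg_i, dist2_i, disk_gap in *;
    field; repeat split; lra.
Qed.

(** Geometry of the quadrilateral.  Each of its four boundary circles is the
    zero set of a simple polynomial, positive on the side containing [Q]. *)

(* circles through i, -i and r, resp. -r: t (1 - |z|^2) -/+ 2x, t = 2r/(1-r^2) *)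
Definition lens_param (r : R) : R := 2 * r / (1 - r ^ 2).
Definition lens_right (t : R) (z : Cpx) : R := t * disk_gap z - 2 * fst z.
Definition lens_left (t : R) (z : Cpx) : R := t * disk_gap z + 2 * fst z.
(* circles orthogonal to the unit circle centred at -/+ i / s: s (|z|^2 + 1) -/+ 2y *)
Definition orth_upper (s : R) (z : Cpx) : R := s * (fst z * fst z + snd z * snd z + 1) - 2 * snd z.
Definition orth_lower (s : R) (z : Cpx) : R := s * (fst z * fst z + snd z * snd z + 1) + 2 * snd z.

Definition quad_open (t s : R) (z : Cpx) : Prop :=
  0 < disk_gap z /\ 0 < lens_right t z /\ 0 < lens_left t z /\
  0 < orth_upper s z /\ 0 < orth_lower s z.
Definition quad_closed (t s : R) (z : Cpx) : Prop :=
  0 < disk_gap z /\ 0 <= lens_right t z /\ 0 <= lens_left t z /\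
  0 <= orth_upper s z /\ 0 <= orth_lower s z.

Lemma lens_param_pos r : 0 < r < 1 -> 0 < lens_param r.
Proof. intros. unfold lens_param. apply Rdiv_lt_0_compat; nra. Qed.

Lemma radius_minus_Cmod_sign v rad : 0 <= rad ->
  same_sign (rad - Cmod v) (rad ^ 2 - (fst v ^ 2 + snd v ^ 2)).
Proof.
  intros Hr. unfold Cmod. rewrite <- (sqrt_pow2 rad Hr) at 1.
  apply same_sign_sqrt; nra.
Qed.

Lemma Cmod_minus_radius_sign v rad : 0 <= rad ->
  same_sign (Cmod v - rad) ((fst v ^ 2 + snd v ^ 2) - rad ^ 2).
Proof.
  intros Hr. unfold Cmod. rewrite <- (sqrt_pow2 rad Hr) at 1.
  apply same_sign_sqrt; nra.
Qed.

Lemma disk_sign z : same_sign (1 - Cmod z) (disk_gap z).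
Proof.
  eapply same_sign_trans; [apply radius_minus_Cmod_sign; lra|].
  apply (same_sign_factor 1); [lra|]. unfold disk_gap. ring.
Qed.

Lemma right_arc_sign r z : 0 < r < 1 ->
  same_sign (lens_radius r - Cmod (Csub z (right_center r))) (lens_right (lens_param r) z).
Proof.
  intros Hr. eapply same_sign_trans.
  - apply radius_minus_Cmod_sign. unfold lens_radius. left; apply Rdiv_lt_0_compat; nra.
  - apply (same_sign_factor (lens_param r)); [now apply lens_param_pos|].
    unfold lens_param, lens_radius, right_center, lens_right, disk_gap, Csub; cbn [fst snd].
    field. split; nra.
Qed.

Lemma left_arc_sign r z : 0 < r < 1 ->
  same_sign (lens_radius r - Cmod (Csub z (left_center r))) (lens_left (lens_param r) z).
Proof.
  intros Hr. eapply same_sign_trans.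
  - apply radius_minus_Cmod_sign. unfold lens_radius. left; apply Rdiv_lt_0_compat; nra.
  - apply (same_sign_factor (lens_param r)); [now apply lens_param_pos|].
    unfold lens_param, lens_radius, left_center, lens_left, disk_gap, Csub; cbn [fst snd].
    field. split; nra.
Qed.

Lemma sin_cos_sq th : sin th ^ 2 + cos th ^ 2 = 1.
Proof. pose proof (sin2_cos2 th). unfold Rsqr in H. lra. Qed.

Lemma upper_arc_sign th z : 0 < sin th -> 0 < cos th ->
  same_sign (Cmod (Csub z (upper_center th)) - orth_radius th) (orth_upper (sin th) z).
Proof.
  intros Hs Hc. pose proof (sin_cos_sq th). eapply same_sign_trans.
  - apply Cmod_minus_radius_sign. unfold orth_radius. left; apply Rdiv_lt_0_compat; lra.
  - apply (same_sign_factor (sin th)); [lra|].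
    unfold orth_radius, upper_center, orth_upper, Csub; cbn [fst snd].
    field_simplify; [|lra]. replace (cos th ^ 2) with (1 - sin th ^ 2) by lra. field. lra.
Qed.

Lemma lower_arc_sign th z : 0 < sin th -> 0 < cos th ->
  same_sign (Cmod (Csub z (lower_center th)) - orth_radius th) (orth_lower (sin th) z).
Proof.
  intros Hs Hc. pose proof (sin_cos_sq th). eapply same_sign_trans.
  - apply Cmod_minus_radius_sign. unfold orth_radius. left; apply Rdiv_lt_0_compat; lra.
  - apply (same_sign_factor (sin th)); [lra|].
    unfold orth_radius, lower_center, orth_lower, Csub; cbn [fst snd].
    field_simplify; [|lra]. replace (cos th ^ 2) with (1 - sin th ^ 2) by lra. field. lra.
Qed.

Lemma closure_nonneg (D : Cpx -> Prop) f z a b : d2 f z a b ->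
  (forall w, D w -> 0 < f w) -> closure D z -> 0 <= f z.
Proof.
  intros Hf Hpos Hcl. destruct (Rle_lt_dec 0 (f z)) as [|Hneg]; [assumption|].
  destruct (d2_continuous _ _ _ _ Hf (- f z)) as [delta [Hdelta Hc]]; [lra|].
  destruct (Hcl delta Hdelta) as [w [Dw Hw]].
  specialize (Hc w Hw). specialize (Hpos w Dw). apply Rabs_def2 in Hc. lra.
Qed.

(* The closed quadrilateral stays off the unit circle: the lenses meet the
   circle only at -/+ i, which the orthogonal arcs cut off. *)
Lemma disk_gap_pos_of_closed t s z : 0 < t -> 0 < s < 1 -> 0 <= disk_gap z ->
  0 <= lens_right t z -> 0 <= lens_left t z -> 0 <= orth_upper s z -> 0 <= orth_lower s z ->
  0 < disk_gap z.
Proof.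
  unfold lens_right, lens_left, orth_upper, orth_lower, disk_gap.
  intros Ht Hs HS H1 H2 H3 H4. destruct HS as [HS|HS]; [assumption|exfalso].
  rewrite <- HS in H1, H2. assert (Hx : fst z = 0) by lra. rewrite Hx in HS, H3, H4.
  assert (Hy : snd z * snd z = 1) by lra. rewrite Hy in H3, H4.
  assert (snd z <= s) by lra. assert (- s <= snd z) by lra. nra.
Qed.

Lemma quad_open_shrink t s z l : 0 < t -> 0 < s -> 0 < l < 1 ->
  quad_closed t s z -> quad_open t s (l * fst z, l * snd z).
Proof.
  intros Ht Hs Hl [HS [H1 [H2 [H3 H4]]]].
  unfold quad_open, lens_right, lens_left, orth_upper, orth_lower, disk_gap in *.
  cbn [fst snd]. set (m := fst z * fst z + snd z * snd z) in *.
  assert (Hm : 0 <= m < 1) by (unfold m; nra).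
  assert (Hlm : l * l * m < 1) by nra.
  assert (P1 : 0 < t * (1 - l) * (1 + l * m)) by (apply Rmult_lt_0_compat; nra).
  assert (P2 : 0 < s * (1 - l) * (1 - l * m)) by (apply Rmult_lt_0_compat; nra).
  repeat split; unfold m in *; nra.
Qed.

Section Quadrilateral.
Variables r th : R.
Hypothesis Hr : 0 < r < 1.
Hypothesis Hsin : 0 < sin th.
Hypothesis Hcos : 0 < cos th.

Lemma Qdom_quad_open z : Qdom r th z <-> quad_open (lens_param r) (sin th) z.
Proof.
  destruct (disk_sign z) as [D _].
  destruct (right_arc_sign r z Hr) as [LR _]. destruct (left_arc_sign r z Hr) as [LL _].
  destruct (upper_arc_sign th z Hsin Hcos) as [OU _].
  destruct (lower_arc_sign th z Hsin Hcos) as [OL _].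
  unfold Qdom, quad_open. rewrite <- D, <- LR, <- LL, <- OU, <- OL. lra.
Qed.

Lemma sin_lt_1 : sin th < 1.
Proof. pose proof (sin_cos_sq th). nra. Qed.

(* The closure of Q is [quad_closed]: limits of points of Q satisfy the
   non-strict inequalities, and points of [quad_closed] are limits of shrunk
   points of Q. *)
Lemma closure_Qdom_closed z : closure (Qdom r th) z -> quad_closed (lens_param r) (sin th) z.
Proof.
  intros Hcl. pose proof (lens_param_pos r Hr). pose proof sin_lt_1.
  assert (Hin : forall w, Qdom r th w -> quad_open (lens_param r) (sin th) w)
    by (intros w; apply Qdom_quad_open).
  assert (G0 : 0 <= disk_gap z).
  { eapply closure_nonneg; [unfold disk_gap; d2_polynomial|apply Hin|exact Hcl]. }
  assert (G1 : 0 <= lens_right (lens_param r) z).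
  { eapply closure_nonneg; [unfold lens_right, disk_gap; d2_polynomial|apply Hin|exact Hcl]. }
  assert (G2 : 0 <= lens_left (lens_param r) z).
  { eapply closure_nonneg; [unfold lens_left, disk_gap; d2_polynomial|apply Hin|exact Hcl]. }
  assert (G3 : 0 <= orth_upper (sin th) z).
  { eapply closure_nonneg; [unfold orth_upper; d2_polynomial|apply Hin|exact Hcl]. }
  assert (G4 : 0 <= orth_lower (sin th) z).
  { eapply closure_nonneg; [unfold orth_lower; d2_polynomial|apply Hin|exact Hcl]. }
  repeat split; try assumption.
  apply (disk_gap_pos_of_closed (lens_param r) (sin th)); auto.
Qed.

Lemma closed_in_closure_Qdom z : quad_closed (lens_param r) (sin th) z -> closure (Qdom r th) z.
Proof.
  intros Hz eps He. pose proof (lens_param_pos r Hr).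
  set (l := 1 - Rmin eps 1 / 2).
  assert (Hm : 0 < Rmin eps 1 <= eps /\ Rmin eps 1 <= 1)
    by (split; [split; [apply Rmin_glb_lt|apply Rmin_l]; lra|apply Rmin_r]).
  assert (Hl : 0 < l < 1) by (unfold l; lra).
  exists (l * fst z, l * snd z). split.
  - apply Qdom_quad_open, quad_open_shrink; auto.
  - destruct Hz as [HS _]. unfold disk_gap in HS.
    apply (Rle_lt_trans _ (1 - l)); [|unfold l; lra].
    unfold Cmod, Csub; cbn [fst snd].
    rewrite <- (sqrt_pow2 (1 - l)) by lra. apply sqrt_le_1_alt.
    match goal with |- ?a <= _ =>
      replace a with ((1 - l) ^ 2 * (fst z * fst z + snd z * snd z)) by ring end.
    assert (0 <= (1 - l) ^ 2) by nra. nra.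
Qed.

Lemma arc_zeros z : Cmod z < 1 ->
  0 < disk_gap z /\
  (Cmod (Csub z (upper_center th)) = orth_radius th -> orth_upper (sin th) z = 0) /\
  (Cmod (Csub z (lower_center th)) = orth_radius th -> orth_lower (sin th) z = 0) /\
  (Cmod (Csub z (right_center r)) = lens_radius r -> lens_right (lens_param r) z = 0) /\
  (Cmod (Csub z (left_center r)) = lens_radius r -> lens_left (lens_param r) z = 0).
Proof.
  intros Hz. split; [apply (disk_sign z); lra|].
  repeat split; intros E; (eapply same_sign_zero; [apply same_sign_sym|]).
  - now apply upper_arc_sign.
  - lra.
  - now apply lower_arc_sign.
  - lra.
  - now apply right_arc_sign.
  - lra.
  - now apply left_arc_sign.
  - lra.
Qed.
End Quadrilateral.

(** For [K > 1] and [t > 0] the affine image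
    [rect_map z = (ln |w| + ln K + i (arg w + atan t)) / (2 ln K)] of the
    logarithm sends the region cut out by the polynomials above, with
    [s = (K^2 - 1)/(K^2 + 1)], onto the rectangle [0, 1] x [0, rect_height]:
    the orthogonal circles become the vertical sides (|w| = 1/K and |w| = K)
    and the lens circles the horizontal ones (arg w = -/+ atan t). *)
Definition orth_param (K : R) : R := (K * K - 1) / (K * K + 1).
Definition rect_height (K t : R) : R := 2 * atan t / (2 * ln K).
Definition rect_x (K : R) (z : Cpx) : R := (log_modulus z + ln K) / (2 * ln K).
Definition rect_y (K t : R) (z : Cpx) : R := (argument z + atan t) / (2 * ln K).
Definition rect_map (K t : R) (z : Cpx) : Cpx := (rect_x K z, rect_y K t z).

Section RectangleMap.
Variables K t : R.
Hypothesis HK : 1 < K.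
Hypothesis Ht : 0 < t.

Lemma ln_K_pos : 0 < ln K.
Proof. rewrite <- ln_1. apply ln_increasing; lra. Qed.

Lemma ln_K2_mult a : 0 < a -> ln (K * K * a) = 2 * ln K + ln a.
Proof. intros Ha. rewrite !ln_mult by nra. ring. Qed.

Lemma rect_x_sign z : 0 < disk_gap z -> same_sign (rect_x K z) (orth_lower (orth_param K) z).
Proof.
  intros HS. pose proof (dist2_neg_i_pos z HS). pose proof (dist2_i_pos z HS).
  pose proof ln_K_pos.
  apply (same_sign_trans _ (ln (K * K * dist2_neg_i z) - ln (dist2_i z))).
  { apply (same_sign_factor (4 * ln K)); [lra|].
    unfold rect_x, log_modulus. rewrite ln_K2_mult by assumption. field. lra. }
  eapply same_sign_trans; [apply same_sign_ln; [apply Rmult_lt_0_compat; nra|lra]|].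
  apply (same_sign_factor (/ (K * K + 1))); [apply Rinv_0_lt_compat; nra|].
  unfold orth_lower, orth_param, dist2_neg_i, dist2_i. field. nra.
Qed.

Lemma rect_x_one_sign z : 0 < disk_gap z ->
  same_sign (1 - rect_x K z) (orth_upper (orth_param K) z).
Proof.
  intros HS. pose proof (dist2_neg_i_pos z HS). pose proof (dist2_i_pos z HS).
  pose proof ln_K_pos.
  apply (same_sign_trans _ (ln (K * K * dist2_i z) - ln (dist2_neg_i z))).
  { apply (same_sign_factor (4 * ln K)); [lra|].
    unfold rect_x, log_modulus. rewrite ln_K2_mult by assumption. field. lra. }
  eapply same_sign_trans; [apply same_sign_ln; [apply Rmult_lt_0_compat; nra|lra]|].
  apply (same_sign_factor (/ (K * K + 1))); [apply Rinv_0_lt_compat; nra|].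
  unfold orth_upper, orth_param, dist2_neg_i, dist2_i. field. nra.
Qed.

Lemma rect_y_sign z : 0 < disk_gap z -> same_sign (rect_y K t z) (lens_right t z).
Proof.
  intros HS. pose proof ln_K_pos.
  apply (same_sign_trans _ (atan (slope z) - atan (- t))).
  { apply (same_sign_factor (2 * ln K)); [lra|].
    unfold rect_y, argument. rewrite atan_opp. field. lra. }
  eapply same_sign_trans; [apply same_sign_atan|].
  apply (same_sign_factor (disk_gap z)); [assumption|].
  unfold lens_right, slope. field. lra.
Qed.

Lemma rect_y_top_sign z : 0 < disk_gap z ->
  same_sign (rect_height K t - rect_y K t z) (lens_left t z).
Proof.
  intros HS. pose proof ln_K_pos.
  apply (same_sign_trans _ (atan t - atan (slope z))).
  { apply (same_sign_factor (2 * ln K)); [lra|].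
    unfold rect_height, rect_y, argument. field. lra. }
  eapply same_sign_trans; [apply same_sign_atan|].
  apply (same_sign_factor (disk_gap z)); [assumption|].
  unfold lens_left, slope. field. lra.
Qed.

Lemma rect_map_open z : quad_open t (orth_param K) z ->
  open_rect (rect_height K t) (rect_map K t z).
Proof.
  intros [HS [H1 [H2 [H3 H4]]]].
  destruct (rect_x_sign z HS) as [X0 _]. destruct (rect_x_one_sign z HS) as [X1 _].
  destruct (rect_y_sign z HS) as [Y0 _]. destruct (rect_y_top_sign z HS) as [Y1 _].
  unfold open_rect, rect_map; cbn [fst snd].
  rewrite <- X0, <- X1, <- Y0, <- Y1 in *. lra.
Qed.

Lemma rect_map_closed z : quad_closed t (orth_param K) z ->
  closed_rect (rect_height K t) (rect_map K t z).
Proof.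
  intros [HS [H1 [H2 [H3 H4]]]].
  destruct (rect_x_sign z HS) as [_ X0]. destruct (rect_x_one_sign z HS) as [_ X1].
  destruct (rect_y_sign z HS) as [_ Y0]. destruct (rect_y_top_sign z HS) as [_ Y1].
  unfold closed_rect, rect_map; cbn [fst snd].
  rewrite <- X0, <- X1, <- Y0, <- Y1 in *. lra.
Qed.

Lemma rect_map_onto w : closed_rect (rect_height K t) w ->
  exists z, 0 < disk_gap z /\ rect_map K t z = w.
Proof.
  destruct w as [X Y]. intros [_ [HY0 HY1]]. cbn [fst snd] in *.
  pose proof ln_K_pos. pose proof (atan_bound t).
  assert (Hat : 0 < atan t) by (rewrite <- atan_0; now apply atan_increasing).
  assert (HY : 2 * ln K * Y <= 2 * atan t).
  { unfold rect_height in HY1. apply (Rmult_le_compat_l (2 * ln K)) in HY1; [|lra].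
    replace (2 * ln K * (2 * atan t / (2 * ln K))) with (2 * atan t) in HY1 by (field; lra).
    exact HY1. }
  destruct (log_coordinates_onto (2 * ln K * X - ln K) (2 * ln K * Y - atan t))
    as [z [HS [EL EA]]]; [nra|].
  exists z. split; [exact HS|]. unfold rect_map, rect_x, rect_y.
  rewrite EL, EA. f_equal; field; lra.
Qed.

Lemma rect_map_onto_open w : open_rect (rect_height K t) w ->
  exists z, quad_open t (orth_param K) z /\ rect_map K t z = w.
Proof.
  intros Hw. destruct (rect_map_onto w) as [z [HS Ez]]; [unfold open_rect, closed_rect in *; lra|].
  exists z. split; [|exact Ez].
  destruct (rect_x_sign z HS) as [X0 _]. destruct (rect_x_one_sign z HS) as [X1 _].
  destruct (rect_y_sign z HS) as [Y0 _]. destruct (rect_y_top_sign z HS) as [Y1 _].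
  unfold open_rect in Hw. unfold rect_map in Ez. rewrite <- Ez in Hw. cbn [fst snd] in Hw.
  unfold quad_open. rewrite <- X0, <- X1, <- Y0, <- Y1. lra.
Qed.

Lemma rect_map_onto_closed w : closed_rect (rect_height K t) w ->
  exists z, quad_closed t (orth_param K) z /\ rect_map K t z = w.
Proof.
  intros Hw. destruct (rect_map_onto w Hw) as [z [HS Ez]].
  exists z. split; [|exact Ez].
  destruct (rect_x_sign z HS) as [_ X0]. destruct (rect_x_one_sign z HS) as [_ X1].
  destruct (rect_y_sign z HS) as [_ Y0]. destruct (rect_y_top_sign z HS) as [_ Y1].
  unfold closed_rect in Hw. unfold rect_map in Ez. rewrite <- Ez in Hw. cbn [fst snd] in Hw.
  unfold quad_closed. rewrite <- X0, <- X1, <- Y0, <- Y1. lra.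
Qed.

Lemma rect_map_inj z1 z2 : 0 < disk_gap z1 -> 0 < disk_gap z2 ->
  rect_map K t z1 = rect_map K t z2 -> z1 = z2.
Proof.
  intros H1 H2 E. pose proof ln_K_pos. injection E as EX EY.
  apply log_coordinates_inj; [assumption|assumption| |].
  - unfold rect_x in EX. apply (Rmult_eq_compat_r (2 * ln K)) in EX.
    field_simplify in EX; lra.
  - unfold rect_y in EY. apply (Rmult_eq_compat_r (2 * ln K)) in EY.
    field_simplify in EY; lra.
Qed.

Lemma d2_rect_x z : 0 < disk_gap z ->
  d2 (rect_x K) z (dlog_x z / (2 * ln K)) (dlog_y z / (2 * ln K)).
Proof.
  intros HS. eapply d2_ext;
    [apply d2_div_const, d2_plus; [apply d2_log_modulus, HS|apply d2_const]|..];
    now rewrite Rplus_0_r.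
Qed.

Lemma d2_rect_y z : 0 < disk_gap z ->
  d2 (rect_y K t) z (- (dlog_y z / (2 * ln K))) (dlog_x z / (2 * ln K)).
Proof.
  intros HS. eapply d2_ext;
    [apply d2_div_const, d2_plus; [apply d2_argument, HS|apply d2_const]|..];
    rewrite Rplus_0_r; [unfold Rdiv; ring|reflexivity].
Qed.

Lemma rect_map_complex_diff z : 0 < disk_gap z ->
  exists l : Cpx, forall eps, eps > 0 -> exists delta, delta > 0 /\
    forall h : Cpx, Cmod h < delta ->
      Cmod (Csub (Csub (rect_map K t (Cadd z h)) (rect_map K t z)) (Cmul l h)) <= eps * Cmod h.
Proof. intros HS. exact (complex_diff_of_CR _ _ z _ _ (d2_rect_x z HS) (d2_rect_y z HS)). Qed.

Lemma rect_map_continuous z : 0 < disk_gap z ->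
  forall eps, eps > 0 -> exists delta, delta > 0 /\ forall w, Cmod (Csub w z) < delta ->
    Cmod (Csub (rect_map K t w) (rect_map K t z)) < eps.
Proof. intros HS. exact (continuous_pair _ _ z _ _ _ _ (d2_rect_x z HS) (d2_rect_y z HS)). Qed.

Lemma rect_map_sides z : 0 < disk_gap z ->
  (orth_upper (orth_param K) z = 0 -> rect_x K z = 1) /\
  (orth_lower (orth_param K) z = 0 -> rect_x K z = 0) /\
  (lens_right t z = 0 -> rect_y K t z = 0) /\
  (lens_left t z = 0 -> rect_y K t z = rect_height K t).
Proof.
  intros HS. repeat split; intros H0.
  - pose proof (same_sign_zero _ _ (rect_x_one_sign z HS) H0). lra.
  - exact (same_sign_zero _ _ (rect_x_sign z HS) H0).
  - exact (same_sign_zero _ _ (rect_y_sign z HS) H0).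
  - pose proof (same_sign_zero _ _ (rect_y_top_sign z HS) H0). lra.
Qed.
End RectangleMap.

(** The angle parameter: with u = tan (th/2) and K = (1 + u)/(1 - u), the
    half-angle formula gives sin th = (K^2 - 1)/(K^2 + 1). *)
Lemma half_angle_param th : 0 < th < PI / 2 ->
  1 < (1 + tan (th / 2)) / (1 - tan (th / 2)) /\
  sin th = orth_param ((1 + tan (th / 2)) / (1 - tan (th / 2))).
Proof.
  intros Hth. pose proof PI_RGT_0.
  assert (Hu0 : 0 < tan (th / 2)) by (apply tan_gt_0; lra).
  assert (Hu1 : tan (th / 2) < 1) by (rewrite <- tan_PI4; apply tan_increasing; lra).
  assert (Hc : 0 < cos (th / 2)) by (apply cos_gt_0; lra).
  split.
  - apply (Rmult_lt_reg_r (1 - tan (th / 2))); [lra|]. field_simplify; lra.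
  - replace th with (2 * (th / 2)) at 1 by field. rewrite sin_2a.
    pose proof (sin_cos_sq (th / 2)).
    assert (Hsc : sin (th / 2) < cos (th / 2)).
    { unfold tan in Hu1. apply (Rmult_lt_compat_r (cos (th / 2))) in Hu1; [|lra].
      field_simplify in Hu1; lra. }
    unfold orth_param, tan. field_simplify_eq; [|repeat split; nra].
    replace (4 * sin (th / 2) ^ 3 * cos (th / 2) + 4 * sin (th / 2) * cos (th / 2) ^ 3)
      with (4 * sin (th / 2) * cos (th / 2) * (sin (th / 2) ^ 2 + cos (th / 2) ^ 2)) by ring.
    rewrite H0. ring.
Qed.

Section Assembly.
Variables r th K : R.
Hypothesis Hr : 0 < r < 1.
Hypothesis Hsin : 0 < sin th.
Hypothesis Hcos : 0 < cos th.
Hypothesis HK : 1 < K.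
Hypothesis Es : sin th = orth_param K.

Lemma Qdom_open z : Qdom r th z <-> quad_open (lens_param r) (orth_param K) z.
Proof. rewrite <- Es. now apply Qdom_quad_open. Qed.

Lemma Qdom_closed z : closure (Qdom r th) z <-> quad_closed (lens_param r) (orth_param K) z.
Proof.
  rewrite <- Es. split; [now apply closure_Qdom_closed|now apply closed_in_closure_Qdom].
Qed.

Lemma rect_map_on_arcs z : Cmod z < 1 ->
  (Cmod (Csub z (upper_center th)) = orth_radius th -> rect_x K z = 1) /\
  (Cmod (Csub z (lower_center th)) = orth_radius th -> rect_x K z = 0) /\
  (Cmod (Csub z (right_center r)) = lens_radius r -> rect_y K (lens_param r) z = 0) /\
  (Cmod (Csub z (left_center r)) = lens_radius r ->
     rect_y K (lens_param r) z = rect_height K (lens_param r)).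
Proof.
  intros Hz. destruct (arc_zeros r th Hr Hsin Hcos z Hz) as [HS [U [L [Rt Lt]]]].
  rewrite Es in U, L.
  destruct (rect_map_sides K (lens_param r) HK z HS) as [X1 [X0 [Y0 Yh]]].
  repeat split; auto.
Qed.

Lemma IsQM_rect_map a b c d :
  Cmod a < 1 /\ Cmod (Csub a (upper_center th)) = orth_radius th /\
    Cmod (Csub a (left_center r)) = lens_radius r ->
  Cmod b < 1 /\ Cmod (Csub b (lower_center th)) = orth_radius th /\
    Cmod (Csub b (left_center r)) = lens_radius r ->
  Cmod c < 1 /\ Cmod (Csub c (lower_center th)) = orth_radius th /\
    Cmod (Csub c (right_center r)) = lens_radius r ->
  Cmod d < 1 /\ Cmod (Csub d (upper_center th)) = orth_radius th /\
    Cmod (Csub d (right_center r)) = lens_radius r ->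
  IsQM (Qdom r th) a b c d (rect_height K (lens_param r)).
Proof.
  intros [Ha [Ha1 Ha2]] [Hb [Hb1 Hb2]] [Hc [Hc1 Hc2]] [Hd [Hd1 Hd2]].
  pose proof (lens_param_pos r Hr) as Ht. set (t := lens_param r) in Ht |- *.
  split.
  { unfold rect_height. pose proof (ln_K_pos K HK). pose proof (atan_increasing 0 t Ht).
    rewrite atan_0 in *. apply Rdiv_lt_0_compat; lra. }
  exists (rect_map K t). repeat match goal with |- _ /\ _ => split end.
  - intros z Hz. apply rect_map_complex_diff. now apply Qdom_open.
  - intros z Hz. apply (rect_map_open K t HK). now apply Qdom_open.
  - intros w Hw. destruct (rect_map_onto_open K t HK Ht w Hw) as [z [Hz Ez]].
    exists z. split; [now apply Qdom_open|exact Ez].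
  - intros z Hz eps He.
    destruct (rect_map_continuous K t z (proj1 (proj1 (Qdom_closed z) Hz)) eps He)
      as [delta [Hdelta Hw]].
    exists delta. split; [exact Hdelta|]. intros w _. apply Hw.
  - intros z Hz. apply (rect_map_closed K t HK). now apply Qdom_closed.
  - intros w Hw. destruct (rect_map_onto_closed K t HK Ht w Hw) as [z [Hz Ez]].
    exists z. split; [now apply Qdom_closed|exact Ez].
  - intros z1 z2 H1 H2. apply (rect_map_inj K t HK); now apply Qdom_closed.
  - destruct (rect_map_on_arcs a Ha) as [X [_ [_ Y]]]. unfold rect_map, t. now rewrite X, Y.
  - destruct (rect_map_on_arcs b Hb) as [_ [X [_ Y]]]. unfold rect_map, t. now rewrite X, Y.
  - destruct (rect_map_on_arcs c Hc) as [_ [X [Y _]]]. unfold rect_map, t. now rewrite X, Y.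
  - destruct (rect_map_on_arcs d Hd) as [X [_ [Y _]]]. unfold rect_map, t. now rewrite X, Y.
Qed.
End Assembly.

Theorem mainTheorem2 (r th : R) (a b c d : Cpx) :
  0 < r < 1 -> 0 < th < PI / 2 ->
  (* a: second quadrant, on the upper orthogonal arc and the arc through -r *)
  (Cmod a < 1 /\ Cre a < 0 /\ Cim a > 0 /\
   Cmod (Csub a (upper_center th)) = orth_radius th /\
   Cmod (Csub a (left_center r)) = lens_radius r) ->
  (* b: third quadrant, on the lower orthogonal arc and the arc through -r *)
  (Cmod b < 1 /\ Cre b < 0 /\ Cim b < 0 /\
   Cmod (Csub b (lower_center th)) = orth_radius th /\
   Cmod (Csub b (left_center r)) = lens_radius r) ->
  (* c: fourth quadrant, on the lower orthogonal arc and the arc through r *)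
  (Cmod c < 1 /\ Cre c > 0 /\ Cim c < 0 /\
   Cmod (Csub c (lower_center th)) = orth_radius th /\
   Cmod (Csub c (right_center r)) = lens_radius r) ->
  (* d: first quadrant, on the upper orthogonal arc and the arc through r *)
  (Cmod d < 1 /\ Cre d > 0 /\ Cim d > 0 /\
   Cmod (Csub d (upper_center th)) = orth_radius th /\
   Cmod (Csub d (right_center r)) = lens_radius r) ->
  let u := tan (th / 2) in
  let rho := 2 * ln ((1 + u) / (1 - u)) in
  let beta := arccot (2 * r / (1 - r ^ 2)) in
  IsQM (Qdom r th) a b c d ((PI - 2 * beta) / rho).
Proof.
  intros Hr Hth Ha Hb Hc Hd u rho beta.
  destruct (half_angle_param th Hth) as [HK Es]. fold u in HK, Es.
  set (K := (1 + u) / (1 - u)) in *.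
  replace ((PI - 2 * beta) / rho) with (rect_height K (lens_param r))
    by (pose proof (ln_K_pos K HK); unfold beta, arccot, rect_height, rho, lens_param;
        field; lra).
  apply IsQM_rect_map; try tauto.
  - apply sin_gt_0; lra.
  - apply cos_gt_0; lra.
Qed.
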